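(* Let $r\geq 3$, $s\geq 3$ and $\ell>4$ be fixed integers. Then there is a constant $C(r,s,\ell)$ such that every connected $(K_{1,r},K_s^h,P_\ell)$-free graph $G$ (of order at least $3$) satisfies $rx_3(G)\leq sdiam_3(G)+C(r,s,\ell)$.
   Context: All graphs are finite, simple, undirected. A tree in an edge-colored graph is rainbow if no two of its edges have the same color; an $S$-tree is a tree containing all vertices of $S$. A $3$-rainbow coloring of a connected graph $G$ is an edge-coloring (adjacent edges may share colors) such that every $3$-element vertex set $S$ has a rainbow $S$-tree; $rx_3(G)$ is the minimum number of colors in such a coloring. $sdiam_3(G)$ is the maximum, over all $3$-element $S\subseteq V(G)$, of the minimum number of edges of an $S$-tree. $(K_{1,r},K_s^h,P_\ell)$-free means no induced subgraph isomorphic to any of these. $P_n$ is the path on $n$ vertices, $K_{1,r}$ the star with $r$ leaves, $K_s^h$ the graph obtained from $K_s$ by attaching a pendant edge to each vertex. *)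

(* Simple graphs are symmetric irreflexive relations e : rel T
   on a finite type T. *)
From mathcomp Require Import all_boot.
Set Implicit Arguments. Unset Strict Implicit. Unset Printing Implicit Defensive.

Section Graphs.
Variable T : finType.
Variable e : rel T.

Definition is_edge (f : {set T}) : bool :=
  [exists x, exists y, (f == [set x; y]) && e x y].

Definition vset (F : {set {set T}}) : {set T} := \bigcup_(f in F) f.

Definition adjF (F : {set {set T}}) : rel T := fun a b => [set a; b] \in F.

(* F is (the edge set of) a tree of G: a subgraph of G that is connected
   and acyclic; acyclicity is expressed as: every edge is a bridge of F. *)
Definition is_tree (F : {set {set T}}) : bool :=
  [&& F != set0,
      [forall f in F, is_edge f],
      [forall x in vset F, forall y in vset F, connect (adjF F) x y] &
      [forall f in F, forall x, forall y,
         (f == [set x; y]) ==> (x != y) ==> ~~ connect (adjF (F :\ f)) x y]].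

Definition is_Stree (S : {set T}) (F : {set {set T}}) : bool :=
  is_tree F && (S \subset vset F).

Definition rainbow (k : nat) (c : {ffun {set T} -> 'I_k}) (F : {set {set T}}) : bool :=
  [forall f in F, forall g in F, (c f == c g) ==> (f == g)].

(* c (using colors from 'I_k, only its values on edges matter) is a
   3-rainbow coloring *)
Definition three_rainbow (k : nat) (c : {ffun {set T} -> 'I_k}) : bool :=
  [forall S : {set T}, (#|S| == 3) ==>
     [exists F : {set {set T}}, is_Stree S F && rainbow c F]].

Definition has_3rainbow_coloring (k : nat) : bool :=
  [exists c : {ffun {set T} -> 'I_k}, three_rainbow c].

(* The bound #|{set T}| (number of subsets of V) is always attained for
   connected G (give every edge its own color), so the default is harmless. *)
Definition rx3 : nat :=
  \big[minn/#|{set T}|]_(k < #|{set T}|.+1 | has_3rainbow_coloring k) k.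

Definition sdist (S : {set T}) : nat :=
  \big[minn/#|T|]_(F : {set {set T}} | is_Stree S F) #|F|.

Definition sdiam3 : nat := \max_(S : {set T} | #|S| == 3) sdist S.

Definition connected : Prop := forall x y : T, connect e x y.

Definition has_induced (H : finType) (h : rel H) : Prop :=
  exists f : H -> T, injective f /\ forall x y, e (f x) (f y) = h x y.

End Graphs.

Definition star_rel (r : nat) : rel 'I_r.+1 :=
  fun i j => (val i == 0) != (val j == 0).

(* K_s^h: vertex (i, true) is the i-th vertex of K_s, (i, false) its pendant *)
Definition hair_rel (s : nat) : rel ('I_s * bool) :=
  fun x y => ((x.2 && y.2) && (x.1 != y.1)) || ((x.2 != y.2) && (x.1 == y.1)).

Definition path_rel (l : nat) : rel 'I_l :=
  fun i j => ((val i).+1 == val j) || ((val j).+1 == val i).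

(* In a connected P_l-free graph every vertex is within distance l - 2 of a
   fixed root v.  Freeness of K_{1,r} and K_s^h bounds the independence number
   of each BFS layer in terms of that of the previous layer (Ramsey, applied to
   chosen neighbours in the previous layer), so alpha(G) is at most a constant A.
   Three disjoint, greedily chosen maximal stable sets D_0, D_1, D_2 dominate
   every vertex outside them, and joining them to v by geodesics gives a
   connected core K with at most 3Al + 1 vertices.  Colour the edges inside K
   injectively by subsets of K, and an edge from outside K into D_i by one of
   three extra colours according to i.  For a triple S, a spanning tree of the
   edges inside K plus, for the i-th vertex of S outside K, an edge into D_i is a
   rainbow S-tree.  Hence rx_3(G) <= 2 ^ (3Al + 1) + 3, whatever sdiam_3(G) is. *)

From mathcomp Require Import all_boot zify.
Set Implicit Arguments. Unset Strict Implicit. Unset Printing Implicit Defensive.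

Section Ramsey.
Variables (T : finType) (R : rel T).
Hypothesis R_sym : symmetric R.

Definition clique (K : {set T}) := {in K &, forall x y, x != y -> R x y}.
Definition stable (K : {set T}) := {in K &, forall x y, x != y -> ~~ R x y}.

Lemma clique0 : clique set0. Proof. by move=> x y; rewrite inE. Qed.
Lemma stable0 : stable set0. Proof. by move=> x y; rewrite inE. Qed.

Lemma stableS (K K' : {set T}) : K' \subset K -> stable K -> stable K'.
Proof. by move=> sK iK x y /(subsetP sK) xK /(subsetP sK); apply: iK. Qed.

Lemma clique_setU1 x (K : {set T}) :
  {in K, forall y, R x y} -> clique K -> clique (x |: K).
Proof.
move=> Rx cK y z; rewrite !inE => /predU1P[->|yK] /predU1P[->|zK]; rewrite ?eqxx //.
- by move=> _; apply: Rx.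
- by move=> _; rewrite R_sym; apply: Rx.
- exact: cK.
Qed.

Lemma stable_setU1 x (K : {set T}) :
  {in K, forall y, ~~ R x y} -> stable K -> stable (x |: K).
Proof.
move=> Rx iK y z; rewrite !inE => /predU1P[->|yK] /predU1P[->|zK]; rewrite ?eqxx //.
- by move=> _; apply: Rx.
- by move=> _; rewrite R_sym; apply: Rx.
- exact: iK.
Qed.

(* The Erdos-Szekeres recursion R(a+1, b+1) <= R(a, b+1) + R(a+1, b). *)
Lemma ramsey a b (X : {set T}) : 'C(a + b, a) <= #|X| ->
  (exists2 K : {set T}, K \subset X & #|K| = a /\ clique K) \/
  (exists2 K : {set T}, K \subset X & #|K| = b /\ stable K).
Proof.
elim: a b X => [|a IHa] b X.
  by left; exists set0; rewrite ?sub0set ?cards0 //; split=> //; apply: clique0.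
elim: b X => [|b IHb] X.
  by right; exists set0; rewrite ?sub0set ?cards0 //; split=> //; apply: stable0.
rewrite addSn addnS binS => hX.
have /card_gt0P[x xX] : 0 < #|X|.
  by apply: leq_trans hX; rewrite addn_gt0 bin_gt0 leq_addr.
pose N := (X :\ x) :&: [set y | R x y].
pose M := (X :\ x) :\: [set y | R x y].
have cNM : #|N| + #|M| = #|X| - 1 by rewrite cardsID (cardsD1 x X) xX add1n subn1.
have xN : x \notin N by rewrite !inE eqxx.
have xM : x \notin M by rewrite !inE eqxx andbF.
have NX : N \subset X by apply/subsetP => y; rewrite !inE => /andP[/andP[]].
have MX : M \subset X by apply/subsetP => y; rewrite !inE => /andP[_ /andP[]].
case: (leqP 'C(a + b.+1, a) #|N|) => hN.
  case: (IHa b.+1 N hN) => [[K KN [cK clK]]|[K KN sK]]; last first.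
    by right; exists K => //; apply: subset_trans KN NX.
  left; exists (x |: K); first by rewrite subUset sub1set xX (subset_trans KN NX).
  split; first by rewrite cardsU1 (contra (subsetP KN x) xN) cK.
  by apply: clique_setU1 clK => y /(subsetP KN); rewrite !inE => /andP[].
have hM : 'C(a.+1 + b, a.+1) <= #|M| by move: hX hN; rewrite addnS addSn; lia.
case: (IHb M hM) => [[K KM cK]|[K KM [cK iK]]].
  by left; exists K => //; apply: subset_trans KM MX.
right; exists (x |: K); first by rewrite subUset sub1set xX (subset_trans KM MX).
split; first by rewrite cardsU1 (contra (subsetP KM x) xM) cK.
by apply: stable_setU1 iK => y /(subsetP KM); rewrite !inE => /andP[].
Qed.

End Ramsey.

Section ForbiddenSubgraphs.
Variables (T : finType) (e : rel T).
Hypotheses (e_sym : symmetric e) (e_irr : irreflexive e).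

Lemma stable_nthE x0 (K : {set T}) i j : stable e K -> i < #|K| -> j < #|K| ->
  e (nth x0 (enum K) i) (nth x0 (enum K) j) = false.
Proof.
move=> sK ilt jlt; have sz : size (enum K) = #|K| by rewrite cardE.
have inK k : k < #|K| -> nth x0 (enum K) k \in K by rewrite -mem_enum -sz => /mem_nth->.
case: (eqVneq i j) => [->|ij]; first by rewrite e_irr.
by apply/negbTE/sK; rewrite ?inK // nth_uniq ?enum_uniq ?sz.
Qed.

Lemma star_of_stable_nbhd r c (K : {set T}) :
  #|K| = r -> stable e K -> {in K, forall x, e c x} -> has_induced e (@star_rel r).
Proof.
move=> cK sK cadj; have sz : size (enum K) = r by rewrite -cardE.
pose f (i : 'I_r.+1) := if val i is k.+1 then nth c (enum K) k else c.
have fK k : k < r -> nth c (enum K) k \in K by rewrite -mem_enum -sz => /mem_nth->.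
have cK' : c \notin K by apply/negP => /cadj; rewrite e_irr.
exists f; split.
  move=> [[|i] hi] [[|j] hj]; rewrite /f /= => h; apply: val_inj => //=.
  - by move: cK'; rewrite h fK.
  - by move: cK'; rewrite -h fK.
  - by congr _.+1; apply/eqP; rewrite -(nth_uniq c _ _ (enum_uniq K)) ?sz // h.
move=> [[|i] hi] [[|j] hj]; rewrite /f /star_rel /=.
- by rewrite e_irr.
- by rewrite cadj ?fK.
- by rewrite e_sym cadj ?fK.
- by rewrite stable_nthE ?cK.
Qed.

Lemma hair_of_matched_clique s (X : {set T}) (u : T -> T) : 0 < s ->
  #|X| = s -> stable e X -> {in X &, injective u} ->
  {in X &, forall x y, x != y -> e (u x) (u y)} ->
  {in X &, forall x y, e x (u y) = (x == y)} ->
  {in X &, forall x y, u x != y} -> has_induced e (@hair_rel s).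
Proof.
case: s => [//|s] _ cX sX u_inj u_clique u_match u_out.
have /card_gt0P[x0 x0X] : 0 < #|X| by rewrite cX.
have sz : size (enum X) = s.+1 by rewrite -cardE.
pose g (k : 'I_s.+1) := nth x0 (enum X) k.
have gX k : g k \in X by rewrite -mem_enum mem_nth ?sz.
have geq k k' : (g k == g k') = (k == k') by rewrite /g nth_uniq ?sz ?enum_uniq.
pose f (p : 'I_s.+1 * bool) := if p.2 then u (g p.1) else g p.1.
exists f; split.
  move=> [k [|]] [k' [|]]; rewrite /f /=.
  - by move/u_inj => /(_ (gX k) (gX k')) /eqP; rewrite geq => /eqP->.
  - by move=> h; have := u_out _ _ (gX k) (gX k'); rewrite h eqxx.
  - by move=> h; have := u_out _ _ (gX k') (gX k); rewrite h eqxx.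
  - by move/eqP; rewrite geq => /eqP->.
move=> [k [|]] [k' [|]]; rewrite /f /hair_rel /=.
- case: (eqVneq k k') => [->|kk]; first by rewrite e_irr.
  by rewrite u_clique ?gX // geq.
- by rewrite e_sym u_match ?gX // geq eq_sym.
- by rewrite u_match ?gX // geq.
- by rewrite /g stable_nthE ?cX.
Qed.

End ForbiddenSubgraphs.

Section IndependenceNumber.
Variables (T : finType) (e : rel T).
Hypotheses (e_sym : symmetric e) (e_irr : irreflexive e).

Definition alpha_le (X : {set T}) (A : nat) :=
  forall I : {set T}, I \subset X -> stable e I -> #|I| <= A.

Section PrivateNeighbours.
Variables (u : T -> T) (J : {set T}).
Hypotheses (J_stable : stable e J) (u_adj : {in J, forall y, e (u y) y}).

Definition back_rel (o : T -> nat) : rel T :=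
  [rel x y | (o x < o y) && e x (u y) || (o y < o x) && e y (u x)].

Lemma back_rel_sym o : symmetric (back_rel o).
Proof. by move=> x y; rewrite /back_rel /= orbC. Qed.

(* The chosen neighbour of the [o]-last vertex of a [back_rel]-clique is the
   centre of a star. *)
Lemma back_rel_no_clique r o (K : {set T}) : 0 < r -> injective o ->
  ~ has_induced e (@star_rel r) -> K \subset J -> #|K| = r -> ~ clique (back_rel o) K.
Proof.
move=> r_gt0 o_inj nstar KJ cK clK; have /card_gt0P[z0 z0K] : 0 < #|K| by rewrite cK.
have [z zK z_max] := @arg_maxnP _ z0 (mem K) o z0K.
apply/nstar/(star_of_stable_nbhd e_sym e_irr (c := u z) cK); first exact: stableS KJ _.
move=> x xK; case: (eqVneq x z) => [->|xz]; first exact/u_adj/(subsetP KJ).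
have lt_xz : o x < o z by rewrite ltn_neqAle (inj_eq o_inj) xz; apply: z_max.
by move: (clK x z xK zK xz); rewrite /back_rel /= lt_xz ltnNge (ltnW lt_xz) orbF e_sym.
Qed.

(* Ramsey twice, for [back_rel] of an order and of its reverse. *)
Lemma private_neighbours r N : 0 < r -> ~ has_induced e (@star_rel r) ->
  'C(r + 'C(r + N, r), r) <= #|J| ->
  exists2 J' : {set T}, J' \subset J &
    #|J'| = N /\ {in J' &, forall x y, x != y -> ~~ e x (u y)}.
Proof.
move=> r_gt0 nstar bigJ.
pose o1 (x : T) := val (enum_rank x); pose o2 (x : T) := #|T| - o1 x.
have o1_lt x : o1 x < #|T| by rewrite /o1; case: (enum_rank x).
have o1_inj : injective o1 by move=> x y /val_inj /enum_rank_inj.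
have o2_inj : injective o2.
  by move=> x y; have := o1_lt x; have := o1_lt y; rewrite /o2 => ? ? ?; apply: o1_inj; lia.
have [[K KJ [cK clK]]|[J1 J1J [cJ1 sJ1]]] := ramsey (back_rel_sym o1) bigJ.
  by case: (back_rel_no_clique r_gt0 o1_inj nstar KJ cK clK).
have [[K KJ1 [cK clK]]|[J2 J2J1 [cJ2 sJ2]]] := ramsey (back_rel_sym o2) (eq_leq (esym cJ1)).
  by case: (back_rel_no_clique r_gt0 o2_inj nstar (subset_trans KJ1 J1J) cK clK).
exists J2; first exact: subset_trans J2J1 J1J.
split=> // x y xJ2 yJ2 xy; case: (ltngtP (o1 x) (o1 y)) => lt.
- have := sJ1 x y (subsetP J2J1 x xJ2) (subsetP J2J1 y yJ2) xy.
  by rewrite /back_rel /= lt => /norP[].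
- have lt2 : o2 x < o2 y by have := o1_lt x; have := o1_lt y; rewrite /o2; lia.
  by have := sJ2 x y xJ2 yJ2 xy; rewrite /back_rel /= lt2 => /norP[].
- by move: xy; rewrite (o1_inj _ _ lt) eqxx.
Qed.

End PrivateNeighbours.

Lemma private_inj (J : {set T}) (u : T -> T) :
  {in J, forall y, e (u y) y} -> {in J &, forall x y, x != y -> ~~ e x (u y)} ->
  {in J &, injective u}.
Proof.
move=> u_adj privJ x y xJ yJ uxy; apply/eqP/negPn/negP => /(privJ x y xJ yJ).
by rewrite -uxy e_sym u_adj.
Qed.

Lemma hair_of_private_clique s (J W : {set T}) (u : T -> T) : 0 < s ->
  stable e J -> {in J, forall y, e (u y) y} ->
  {in J &, forall x y, x != y -> ~~ e x (u y)} -> {in J &, forall x y, u x != y} ->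
  W \subset u @: J -> #|W| = s -> clique e W -> has_induced e (@hair_rel s).
Proof.
move=> s_gt0 sJ u_adj privJ u_out WU cW clW; have u_inj := private_inj u_adj privJ.
pose H := [set x in J | u x \in W].
have HJ : H \subset J by apply/subsetP => x; rewrite inE => /andP[].
have uH : u @: H = W.
  apply/setP => w; apply/imsetP/idP => [[x]|wW]; first by rewrite inE => /andP[_ ?] ->.
  have /imsetP[x xJ wx] := subsetP WU w wW.
  by exists x; rewrite // inE xJ -wx wW.
have uH_inj : {in H &, injective u} by apply: sub_in2 u_inj; apply/subsetP.
apply: (hair_of_matched_clique e_sym e_irr s_gt0 (X := H) _ (stableS HJ sJ) uH_inj).
- by rewrite -cW -uH card_in_imset.
- move=> x y xH yH xy; apply: clW; rewrite -?uH ?imset_f //.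
  by apply: contra xy => /eqP/uH_inj ->.
- move=> x y /(subsetP HJ) xJ /(subsetP HJ) yJ; have [->|xy] := eqVneq x y.
    by rewrite e_sym u_adj.
  exact/negbTE/privJ.
- by move=> x y /(subsetP HJ) xJ /(subsetP HJ) yJ; apply: u_out.
Qed.

Definition next_alpha r s A := 'C(r + 'C(r + 'C(s + A.+1, s), r), r).

Lemma alpha_le_dominated r s (X Y : {set T}) A : 0 < r -> 0 < s ->
  ~ has_induced e (@star_rel r) -> ~ has_induced e (@hair_rel s) ->
  alpha_le X A -> [disjoint X & Y] -> {in Y, forall y, exists2 x, x \in X & e x y} ->
  alpha_le Y (next_alpha r s A).
Proof.
move=> r_gt0 s_gt0 nstar nhair aX dXY dom J JY sJ; rewrite leqNgt; apply/negP => big.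
pose u y := odflt y [pick x in X | e x y].
have uJ y : y \in J -> (u y \in X) && e (u y) y.
  move/(subsetP JY) => yY; rewrite /u; case: pickP => [x /andP[-> ->] //|none] /=.
  by case: (dom y yY) => x xX exy; have := none x; rewrite xX exy.
have u_adj : {in J, forall y, e (u y) y} by move=> y /uJ /andP[].
have [J' J'J [cJ' privJ']] := private_neighbours sJ u_adj r_gt0 nstar (ltnW big).
have u_adj' : {in J', forall y, e (u y) y} by move=> y /(subsetP J'J); apply: u_adj.
have UX : u @: J' \subset X.
  by apply/subsetP => _ /imsetP[x /(subsetP J'J) /uJ /andP[xX _] ->].
have cU : #|u @: J'| = 'C(s + A.+1, s).
  by rewrite card_in_imset //; apply: private_inj u_adj' privJ'.
have [[W WU [cW clW]]|[W WU [cW sW]]] := ramsey e_sym (eq_leq (esym cU)); last first.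
  by have := aX W (subset_trans WU UX) sW; rewrite cW ltnn.
apply/nhair/(hair_of_private_clique s_gt0 (stableS J'J sJ) u_adj' privJ' _ WU cW clW).
move=> x y xJ' /(subsetP J'J)/(subsetP JY) yY; apply/eqP => uxy.
by have /andP[+ _] := uJ x (subsetP J'J x xJ'); rewrite uxy (disjointFl dXY yY).
Qed.

End IndependenceNumber.

Section Trees.
Variables (T : finType) (e : rel T).

Lemma connect_first_step (R : rel T) x y : connect R x y -> x != y -> exists z, R x z.
Proof. by case/connectP => -[/= _ ->|z p /= /andP[Rxz _] _ _]; [rewrite eqxx | exists z]. Qed.

Lemma adjF_sym (F : {set {set T}}) : symmetric (adjF F).
Proof. by move=> a b; rewrite /adjF setUC. Qed.

Lemma vsetP (F : {set {set T}}) x : reflect (exists2 f, f \in F & x \in f) (x \in vset F).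
Proof. by apply: (iffP bigcupP) => -[f]; exists f. Qed.

Lemma vsetS (F G : {set {set T}}) : F \subset G -> vset F \subset vset G.
Proof. by move=> FG; apply/bigcupsP => f fF; apply: bigcup_sup (subsetP FG f fF). Qed.

Lemma adjF_vset (F : {set {set T}}) x z : adjF F x z -> x \in vset F.
Proof. by move=> Fxz; apply/vsetP; exists [set x; z]; rewrite // set21. Qed.

Lemma rainbowS k (c : {ffun {set T} -> 'I_k}) (F G : {set {set T}}) :
  G \subset F -> rainbow c F -> rainbow c G.
Proof.
move=> GF /forall_inP cF; apply/forall_inP => f fG; apply/forall_inP => g gG.
exact: (forall_inP (cF f (subsetP GF f fG)) g (subsetP GF g gG)).
Qed.

Definition connected_edges (F : {set {set T}}) :=
  [&& F != set0, [forall f in F, is_edge e f] &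
      [forall x in vset F, forall y in vset F, connect (adjF F) x y]].

Lemma connected_edgesP (F : {set {set T}}) :
  reflect [/\ F != set0, {in F, forall f, is_edge e f} &
             {in vset F &, forall x y, connect (adjF F) x y}]
          (connected_edges F).
Proof.
apply: (iffP and3P) => [[F0 /forall_inP Fe Fc]|[F0 Fe Fc]]; split=> //.
- by move=> x y xF yF; apply: (forall_inP (forall_inP Fc x xF) y yF).
- exact/forall_inP.
- by apply/forall_inP => x xF; apply/forall_inP => y yF; apply: Fc.
Qed.

Lemma connected_edgesD1 (F : {set {set T}}) f x y :
  connected_edges F -> f \in F -> f = [set x; y] -> x != y ->
  connect (adjF (F :\ f)) x y ->
  connected_edges (F :\ f) /\ vset (F :\ f) = vset F.
Proof.
case/connected_edgesP => _ Fe Fc fF fxy xy cxy.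
have [z Hxz] := connect_first_step cxy xy.
have cyx : connect (adjF (F :\ f)) y x by rewrite (sym_connect_sym (@adjF_sym _)).
have yx : y != x by rewrite eq_sym.
have [z' Hyz'] := connect_first_step cyx yx.
have vH : vset (F :\ f) = vset F.
  apply/eqP; rewrite eqEsubset vsetS ?subsetDl //=; apply/subsetP => w /vsetP[g gF wg].
  have [gf|gf] := eqVneq g f; last by apply/vsetP; exists g; rewrite // !inE gf.
  rewrite gf fxy !inE in wg.
  by case/predU1P: wg => [->|/eqP->]; [apply: adjF_vset Hxz | apply: adjF_vset Hyz'].
split=> //; apply/connected_edgesP; split.
- by apply/set0Pn; exists [set x; z].
- by move=> g /setD1P[_ /Fe].
move=> a b; rewrite vH => aF bF; apply: connect_sub (Fc a b aF bF) => u w Huw.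
have [uwf|uwf] := eqVneq [set u; w] f; last by apply: connect1; rewrite /adjF !inE uwf.
have uxy : u \in [set x; y] by rewrite -fxy -uwf set21.
have wxy : w \in [set x; y] by rewrite -fxy -uwf set22.
by move: uxy wxy; rewrite !inE => /predU1P[->|/eqP->] /predU1P[->|/eqP->] //;
   rewrite (sym_connect_sym (@adjF_sym _)).
Qed.

(* A minimum-size connected spanning edge set has only bridges. *)
Lemma spanning_subtree (F : {set {set T}}) : connected_edges F ->
  exists2 F' : {set {set T}}, F' \subset F & is_tree e F' && (vset F' == vset F).
Proof.
move=> cF; pose spanning (F' : {set {set T}}) :=
  [&& F' \subset F, connected_edges F' & vset F' == vset F].
have sF : spanning F by rewrite /spanning subxx cF eqxx.
have [F' /and3P[F'F cF' /eqP vF'] F'_min] :=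
  @arg_minnP _ F spanning (fun F' : {set {set T}} => #|F'|) sF.
exists F' => //; rewrite vF' eqxx andbT /is_tree; case/and3P: (cF') => -> -> -> /=.
apply/forall_inP => f fF'; apply/forallP => x; apply/forallP => y.
apply/implyP => /eqP fxy; apply/implyP => xy; apply/negP => cxy.
have [cH vH] := connected_edgesD1 cF' fF' fxy xy cxy.
have /F'_min : spanning (F' :\ f).
  by rewrite /spanning cH vH vF' eqxx (subset_trans (subsetDl _ _) F'F).
by rewrite (cardsD1 f F') fF' add1n ltnn.
Qed.

End Trees.

Section RainbowColoring.
Variables (T : finType) (e : rel T).

Definition adj_in (X : {set T}) : rel T := [rel a b | [&& a \in X, b \in X & e a b]].

Variables (K : {set T}) (D : nat -> {set T}).
Hypothesis K_conn : {in K &, forall x y, connect (adj_in K) x y}.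
Hypothesis D_disj : forall i j x, i < 3 -> j < 3 -> x \in D i -> x \in D j -> i = j.
Hypothesis D_sub : forall i, i < 3 -> D i \subset K.
Hypothesis D_dom : forall w, w \notin K -> forall i, i < 3 -> exists2 d, d \in D i & e w d.

Definition D_index (f : {set T}) : nat :=
  if [exists d in D 0, d \in f] then 0 else if [exists d in D 1, d \in f] then 1 else 2.

Lemma D_index_pendant w d j : w \notin K -> j < 3 -> d \in D j -> D_index [set w; d] = j.
Proof.
move=> wK j3 dD; have hit i : i < 3 -> [exists d' in D i, d' \in [set w; d]] = (i == j).
  move=> i3; apply/exists_inP/eqP => [[d' d'D]|->]; last by exists d; rewrite ?set22.
  rewrite !inE => /predU1P[d'w|/eqP d'd]; last by apply: D_disj i3 j3 d'D _; rewrite d'd.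
  by move: wK; rewrite -d'w (subsetP (D_sub i3) d' d'D).
by rewrite /D_index !hit //; case: j j3 {dD hit} => [|[|[|]]].
Qed.

Definition core_edges := [set f | is_edge e f && (f \subset K)].

Definition attach (W : {set T}) (a : T -> T) := core_edges :|: [set [set w; a w] | w in W].

(* Colours below [2 ^ #|K|] name the subsets of [K]; an edge leaving [K]
   towards [D i] gets colour [2 ^ #|K| + i]. *)
Definition rainbow_color : {ffun {set T} -> 'I_(2 ^ #|K|).+3} :=
  [ffun f : {set T} => inord (if f \subset K then index f (enum (powerset K))
                    else 2 ^ #|K| + D_index f)].

Lemma index_powerset_lt (f : {set T}) : f \subset K -> index f (enum (powerset K)) < 2 ^ #|K|.
Proof. by move=> fK; rewrite -card_powerset cardE index_mem mem_enum powersetE. Qed.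

Lemma rainbow_colorE (f : {set T}) : rainbow_color f =
  (if f \subset K then index f (enum (powerset K)) else 2 ^ #|K| + D_index f) :> nat.
Proof.
rewrite ffunE inordK // ltnS; case: ifP => [/index_powerset_lt|_]; first lia.
suff : D_index f <= 2 by lia.
by rewrite /D_index; case: ifP => //; case: ifP.
Qed.

Lemma rainbow_attach (W : {set T}) (a : T -> T) (j : T -> nat) :
  {in W, forall w, [/\ w \notin K, j w < 3 & a w \in D (j w)]} -> {in W &, injective j} ->
  rainbow rainbow_color (attach W a).
Proof.
move=> Wa j_inj; have pendant f : f \in attach W a -> ~~ (f \subset K) ->
    exists2 w, w \in W & f = [set w; a w].
  by rewrite !inE => /orP[/andP[_ ->]//|/imsetP[w wW ->]]; exists w.
have pendant_color w : w \in W -> rainbow_color [set w; a w] = 2 ^ #|K| + j w :> nat.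
  move=> wW; have [wK j3 aD] := Wa w wW.
  by rewrite rainbow_colorE subUset sub1set (negbTE wK) (D_index_pendant wK j3 aD).
apply/forall_inP => f fF; apply/forall_inP => g gF; apply/implyP => /eqP/(congr1 (@nat_of_ord _)).
have [fK|fK] := boolP (f \subset K); have [gK|gK] := boolP (g \subset K).
- rewrite !rainbow_colorE fK gK => /(congr1 (nth set0 (enum (powerset K)))).
  by rewrite !nth_index ?mem_enum ?powersetE // => ->.
- have [w wW ->] := pendant g gF gK; rewrite pendant_color // rainbow_colorE fK.
  by move=> eq; have := index_powerset_lt fK; rewrite eq ltnNge leq_addr.
- have [w wW ->] := pendant f fF fK; rewrite pendant_color // rainbow_colorE gK.
  by move=> eq; have := index_powerset_lt gK; rewrite -eq ltnNge leq_addr.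
have [w wW ->] := pendant f fF fK; have [w' w'W ->] := pendant g gF gK.
by rewrite !pendant_color // => /addnI/j_inj ->.
Qed.

Lemma core_edges_connect : {in K &, forall x y, connect (adjF core_edges) x y}.
Proof.
move=> x y xK yK; apply: connect_sub (K_conn xK yK) => a b /and3P[aK bK eab].
apply: connect1; rewrite /adjF inE subUset !sub1set aK bK !andbT.
by apply/existsP; exists a; apply/existsP; exists b; rewrite eqxx.
Qed.

Lemma core_card_gt1 : 1 < #|T| -> 1 < #|K|.
Proof.
move=> T2; rewrite ltnNge; apply/negP => K1.
have [w _ wK] : exists2 w, w \in [set: T] & w \notin K.
  apply/subsetPn; apply: contraTN T2 => /subset_leq_card; rewrite cardsT -leqNgt.
  by move/leq_trans; apply.
have [d0 d0D _] := D_dom wK (isT : 0 < 3).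
have [d1 d1D _] := D_dom wK (isT : 1 < 3).
have d01 : d0 = d1.
  by apply: (card_le1_eqP K1); [apply: subsetP (D_sub _) _ d1D | apply: subsetP (D_sub _) _ d0D].
by have := D_disj (isT : 0 < 3) (isT : 1 < 3) d0D; rewrite d01 => /(_ d1D).
Qed.

Lemma core_sub_vset : 1 < #|K| -> K \subset vset core_edges.
Proof.
move=> K2; apply/subsetP => x xK.
have [y yK xy] : exists2 y, y \in K & x != y.
  have /card_gt1P[a [b [aK bK ab]]] := K2.
  by have [ax|] := eqVneq a x; [exists b; rewrite // -ax | exists a; rewrite // eq_sym].
have [z xz] := connect_first_step (core_edges_connect xK yK) xy.
exact: adjF_vset xz.
Qed.

Lemma adjF_subrel (F G : {set {set T}}) : F \subset G -> subrel (adjF F) (adjF G).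
Proof. by move=> FG x y; apply: (subsetP FG). Qed.

Section Attach.
Variables (W : {set T}) (a : T -> T).
Hypothesis a_out : {in W, forall w, a w \in K /\ e w (a w)}.

Lemma vset_attach : 1 < #|K| -> vset (attach W a) = W :|: K.
Proof.
move=> K2; apply/eqP; rewrite eqEsubset; apply/andP; split.
  apply/subsetP => x /vsetP[f]; rewrite !inE => /orP[/andP[_ /subsetP fK] /fK ->|].
    by rewrite orbT.
  by case/imsetP=> w wW ->; rewrite !inE => /predU1P[->|/eqP->]; rewrite ?wW ?(a_out wW).1 ?orbT.
rewrite subUset; apply/andP; split.
  apply/subsetP => w wW; apply/vsetP; exists [set w; a w]; rewrite ?set21 //.
  by rewrite inE (imset_f (fun w => [set w; a w])) ?orbT.
by apply: subset_trans (core_sub_vset K2) (vsetS (subsetUl _ _)).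
Qed.

Lemma attach_connected : 1 < #|K| -> connected_edges e (attach W a).
Proof.
move=> K2; have core_sub := adjF_subrel (subsetUl core_edges [set [set w; a w] | w in W]).
have to_core x : x \in W :|: K -> exists2 z, z \in K & connect (adjF (attach W a)) x z.
  case/setUP => [xW|xK]; last by exists x.
  exists (a x); first exact: (a_out xW).1.
  by apply: connect1; rewrite /adjF inE (imset_f (fun w => [set w; a w])) ?orbT.
apply/connected_edgesP; split.
- have /card_gt0P[x xK] : 0 < #|K| by apply: ltnW.
  have /vsetP[f fF _] := subsetP (core_sub_vset K2) x xK.
  by apply/set0Pn; exists f; rewrite inE fF.
- move=> f; rewrite !inE => /orP[/andP[]//|/imsetP[w wW ->]].
  by apply/existsP; exists w; apply/existsP; exists (a w); rewrite eqxx (a_out wW).2.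
move=> x y; rewrite vset_attach // => xWD yWD.
have [x' x'K xx'] := to_core x xWD; have [y' y'K yy'] := to_core y yWD.
apply: connect_trans xx' _; rewrite (sym_connect_sym (@adjF_sym _ _)) in yy'.
apply: connect_trans yy'; apply: connect_sub (core_edges_connect x'K y'K).
by move=> u w /core_sub/connect1.
Qed.

End Attach.

Lemma three_rainbow_rainbow_color : three_rainbow e rainbow_color.
Proof.
apply/forallP => S; apply/implyP => /eqP cS.
have K2 : 1 < #|K| by apply: core_card_gt1; apply: leq_trans (max_card S); rewrite cS.
pose W := S :\: K; pose j w := index w (enum S).
pose a w := odflt w [pick d in D (j w) | e w d].
have j3 w : w \in S -> j w < 3 by move=> wS; rewrite /j -cS cardE index_mem mem_enum.
have aP w : w \in W -> (a w \in D (j w)) && e w (a w).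
  rewrite inE => /andP[wK wS]; rewrite /a; case: pickP => [d /andP[-> ->] //|none].
  by have [d dD ed] := D_dom wK (j3 w wS); have := none d; rewrite dD ed.
have j_inj : {in W &, injective j}.
  move=> w w'; rewrite !inE => /andP[_ wS] /andP[_ w'S] /(congr1 (nth w (enum S))).
  by rewrite !nth_index ?mem_enum.
have a_out : {in W, forall w, a w \in K /\ e w (a w)}.
  move=> w wW; have /andP[aD ->] := aP w wW; split=> //.
  by apply: subsetP aD; apply/D_sub/j3; move: wW; rewrite inE => /andP[].
have [F' F'F /andP[tF' /eqP vF']] := spanning_subtree (attach_connected a_out K2).
apply/existsP; exists F'; rewrite /is_Stree tF' vF' vset_attach //=.
apply/andP; split.
  by apply/subsetP => w wS; rewrite !inE; case: (w \in K); rewrite ?orbT ?wS.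
apply: rainbowS F'F _; apply: rainbow_attach j_inj => w wW.
have /andP[aD _] := aP w wW; move: wW; rewrite inE => /andP[wK wS].
by split=> //; apply: j3.
Qed.

End RainbowColoring.

Lemma bigmin_le (I : eqType) (s : seq I) (P : pred I) (F : I -> nat) d j :
  j \in s -> P j -> \big[minn/d]_(i <- s | P i) F i <= F j.
Proof.
elim: s => [//|a s IH]; rewrite inE big_cons => /predU1P[->|js] Pj; first by rewrite Pj geq_minl.
by case: ifP => _; [rewrite geq_min IH ?orbT | apply: IH].
Qed.

Lemma rx3_le (T : finType) (e : rel T) k : has_3rainbow_coloring e k -> rx3 e <= k.
Proof.
move=> ek; rewrite /rx3; have [kT|Tk] := leqP k #|{set T}|.
  have kI := mem_index_enum (Ordinal (kT : k < _.+1)).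
  exact: (bigmin_le (fun i : 'I_#|{set T}|.+1 => nat_of_ord i) _ kI).
apply: leq_trans (ltnW Tk); apply: (big_ind (fun x => x <= #|{set T}|)) => //.
- by move=> x y xT _; rewrite geq_min xT.
- by move=> i _; rewrite -ltnS.
Qed.

Lemma card_bigcup_le (I T : finType) (P : pred I) (F : I -> {set T}) k :
  (forall i, P i -> #|F i| <= k) -> #|\bigcup_(i | P i) F i| <= #|P| * k.
Proof.
move=> Fk; rewrite -sum_nat_const; elim/big_rec2: _ => [|i U n Pi Un]; first by rewrite cards0.
by apply: leq_trans (leq_card_setU _ _).1 _; apply: leq_add => //; apply: Fk.
Qed.

Section Domination.
Variables (T : finType) (e : rel T).
Hypothesis e_sym : symmetric e.

Lemma maximal_stable_dominates (Z : {set T}) : exists D : {set T},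
  [/\ D \subset Z, stable e D & {in Z, forall w, w \notin D -> exists2 d, d \in D & e w d}].
Proof.
pose ok (D : {set T}) := (D \subset Z) && [forall x in D, forall y in D, (x != y) ==> ~~ e x y].
have okP (D : {set T}) : reflect (D \subset Z /\ stable e D) (ok D).
  apply: (iffP andP) => -[DZ sD]; split=> //.
    by move=> x y xD yD; apply/implyP; apply: (forall_inP (forall_inP sD x xD) y yD).
  by apply/forall_inP => x xD; apply/forall_inP => y yD; apply/implyP/sD.
have ok0 : ok set0 by apply/okP; split; [apply: sub0set | apply: stable0].
have [D /okP[DZ sD] D_max] := @arg_maxnP _ set0 ok (fun D : {set T} => #|D|) ok0.
exists D; split=> // w wZ wD; apply/exists_inP; apply: contraT => /exists_inPn nD.
suff /D_max : ok (w |: D) by rewrite cardsU1 wD add1n /= ltnn.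
apply/okP; split; first by rewrite subUset sub1set wZ DZ.
by apply: stable_setU1 sD => // d /nD.
Qed.

(* Greedily, each [D i] is a maximal stable set avoiding [D 0], ..., [D i.-1]. *)
Lemma dominating_stables k : exists D : nat -> {set T},
  [/\ forall i, stable e (D i),
      forall i j x, i < k -> j < k -> x \in D i -> x \in D j -> i = j &
      forall w, (forall j, j < k -> w \notin D j) ->
        forall i, i < k -> exists2 d, d \in D i & e w d].
Proof.
elim: k => [|k [D [sD dD mD]]]; first by exists (fun _ => set0); split=> // i; apply: stable0.
have [Dk [DkZ sDk mDk]] := maximal_stable_dominates (~: \bigcup_(i < k) D i).
have DkD x j : x \in Dk -> j < k -> x \notin D j.
  move=> /(subsetP DkZ); rewrite inE => xU jk; apply: contra xU => xDj.
  by apply/bigcupP; exists (Ordinal jk).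
pose D' i := if i == k then Dk else D i.
have D'E i : i < k.+1 -> (i = k /\ D' i = Dk) \/ (i < k /\ D' i = D i).
  by rewrite ltnS leq_eqVlt /D' => /predU1P[->|ik]; [left; rewrite eqxx | right; rewrite ltn_eqF].
exists D'; split.
- by move=> i; rewrite /D'; case: ifP.
- move=> i j x /D'E[[-> ->]|[ik ->]] /D'E[[-> ->]|[jk ->]] //.
  + by move=> xDk xDj; have := DkD x j xDk jk; rewrite xDj.
  + by move=> xDi xDk; have := DkD x i xDk ik; rewrite xDi.
  + exact: dD.
move=> w wD' i /D'E[[-> ->]|[ik ->]].
  apply: mDk; last by have := wD' k (ltnSn k); rewrite /D' eqxx.
  rewrite inE; apply/bigcupP => -[j _]; apply/negP.
  by have := wD' j (ltnW (ltn_ord j)); rewrite /D' ltn_eqF.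
by apply: mD ik => j jk; have := wD' j (ltnW jk); rewrite /D' ltn_eqF.
Qed.

End Domination.

Section Hull.
Variables (T : finType) (e : rel T).
Hypothesis e_sym : symmetric e.

Lemma adj_in_sym X : symmetric (adj_in e X).
Proof. by move=> a b; rewrite /adj_in /= e_sym andbCA. Qed.

Lemma adj_in_subrel (X Y : {set T}) : X \subset Y -> subrel (adj_in e X) (adj_in e Y).
Proof. by move=> XY a b /and3P[aX bX eab]; rewrite /adj_in /= !(subsetP XY) ?eab. Qed.

Lemma connected_hull (v : T) (X : {set T}) l :
  {in X, forall x, exists P : {set T},
     [/\ x \in P, v \in P, #|P| <= l & {in P, forall y, connect (adj_in e P) y v}]} ->
  exists K : {set T}, [/\ X \subset K, #|K| <= (#|X| * l).+1 &
                          {in K &, forall x y, connect (adj_in e K) x y}].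
Proof.
move=> hP; pose good x (P : {set T}) :=
  [&& x \in P, v \in P, #|P| <= l & [forall y in P, connect (adj_in e P) y v]].
pose P x := odflt set0 [pick P | good x P].
have PP x : x \in X -> good x (P x).
  move=> xX; rewrite /P; case: pickP => [//|none]; have [Q [xQ vQ cQ Qv]] := hP x xX.
  by have := none Q; rewrite /good xQ vQ cQ /=; move/negbT/forall_inPn => [y /Qv ->].
pose K := v |: \bigcup_(x in X) P x.
have PK x : x \in X -> P x \subset K.
  by move=> xX; apply: subset_trans (bigcup_sup x xX) (subsetUr _ _).
have to_v y : y \in K -> connect (adj_in e K) y v.
  rewrite !inE => /predU1P[->//|/bigcupP[x xX yP]].
  have /and4P[_ _ _ /forall_inP Pv] := PP x xX.
  by apply: connect_sub (Pv y yP) => a b /(adj_in_subrel (PK x xX))/connect1.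
exists K; split.
- apply/subsetP => x xX; apply: (subsetP (PK x xX)).
  by case/and4P: (PP x xX).
- rewrite cardsU1 -add1n leq_add ?leq_b1 //.
  by apply: card_bigcup_le => x xX; case/and4P: (PP x xX).
move=> x y xK yK; apply: connect_trans (to_v x xK) _.
by rewrite (sym_connect_sym (@adj_in_sym _)) to_v.
Qed.

End Hull.

Fixpoint alpha_bound (r s i : nat) : nat :=
  if i is j.+1 then alpha_bound r s j + next_alpha r s (alpha_bound r s j) else 1.

Section Balls.
Variables (T : finType) (e : rel T).
Hypotheses (e_sym : symmetric e) (e_irr : irreflexive e).
Variable v : T.

Fixpoint ball (n : nat) : {set T} :=
  if n is m.+1 then ball m :|: [set y | [exists x in ball m, e x y]] else [set v].

Definition at_dist n x := (x \in ball n) && (if n is m.+1 then x \notin ball m else true).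

Lemma ball_mono m n : m <= n -> ball m \subset ball n.
Proof.
elim: n => [|n IH]; first by rewrite leqn0 => /eqP->.
rewrite leq_eqVlt => /orP[/eqP->//|/IH sub]; exact: subset_trans sub (subsetUl _ _).
Qed.

Lemma ball_adj a b i : e a b -> a \in ball i -> b \in ball i.+1.
Proof. by move=> eab aB; rewrite /= !inE; apply/orP; right; apply/exists_inP; exists a. Qed.

Lemma ball_pred x i : x \in ball i.+1 -> x \notin ball i -> exists2 y, at_dist i y & e y x.
Proof.
rewrite /= in_setU => /orP[->//|]; rewrite inE => /existsP[y /andP[yB exy]] xB.
exists y => //; rewrite /at_dist yB; case: i yB xB => [//|j] yB xB.
by apply: contra xB => /(ball_adj exy).
Qed.

Lemma at_dist_ball i x : at_dist i x -> x \in ball i.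
Proof. by case/andP. Qed.

Lemma at_dist_notin_ball i j x : at_dist i x -> j < i -> x \notin ball j.
Proof.
case: i => [//|i] /andP[_ xi] ji; apply: contra xi; apply/subsetP/ball_mono.
by rewrite -ltnS.
Qed.

Lemma at_dist_inj i j x : at_dist i x -> at_dist j x -> i = j.
Proof.
move=> di dj; case: (ltngtP i j) => // h.
  by move: (at_dist_notin_ball dj h); rewrite at_dist_ball.
by move: (at_dist_notin_ball di h); rewrite at_dist_ball.
Qed.

Lemma at_dist_far i j a b : at_dist i a -> at_dist j b -> i.+1 < j -> ~~ e a b.
Proof.
move=> da db ij; apply/negP => eab.
by move: (at_dist_notin_ball db ij); rewrite (ball_adj eab (at_dist_ball da)).
Qed.

Lemma geodesic m x : at_dist m x -> exists g : nat -> T,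
  [/\ g m = x, forall i, i <= m -> at_dist i (g i) & forall i, i < m -> e (g i) (g i.+1)].
Proof.
elim: m x => [|m IH] x dx.
  by exists (fun _ => x); split=> // i; rewrite leqn0 => /eqP->.
have [y dy eyx] := ball_pred (at_dist_ball dx) (at_dist_notin_ball dx (ltnSn m)).
have [g [gm gd ge]] := IH y dy.
exists (fun i => if i == m.+1 then x else g i); split; first by rewrite eqxx.
  by move=> i; rewrite leq_eqVlt => /predU1P[->|im]; rewrite ?eqxx ?ltn_eqF ?gd.
move=> i im; rewrite ltn_eqF //; have [->|ne] := eqVneq i m; first by rewrite eqxx gm.
by rewrite ltn_eqF ?ge // ltn_neqAle ne -ltnS.
Qed.

Lemma ball_path p a n : a \in ball n -> path e a p -> last a p \in ball (n + size p).
Proof.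
elim: p a n => [|b p IH] a n /=; first by rewrite addn0.
by move=> aB /andP[eab pp]; rewrite addnS -addSn; apply: IH => //; apply: ball_adj eab aB.
Qed.

Lemma at_dist_exists n x : x \in ball n -> exists2 m, m <= n & at_dist m x.
Proof.
elim: n => [|n IH] xB; first by exists 0; rewrite /at_dist ?xB.
have [xn|xn] := boolP (x \in ball n).
  by have [m mn dm] := IH xn; exists m => //; apply: leqW.
by exists n.+1; rewrite /at_dist ?xB ?xn.
Qed.

(* A geodesic to a vertex at distance m is an induced path on m+1 vertices. *)
Lemma at_dist_path_free l m x :
  ~ has_induced e (@path_rel l) -> at_dist m x -> m.+2 <= l.
Proof.
move=> npath dx; rewrite leqNgt; apply/negP => lm.
have [g [gm gd ge]] := geodesic dx.
have im (i : 'I_l) : i <= m by have := ltn_ord i; lia.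
have eg i j : i < j -> j <= m -> e (g i) (g j) = (i.+1 == j).
  move=> ij jm; have [<-|ij'] := eqVneq i.+1 j; first by rewrite ge //; lia.
  have ij2 : i.+1 < j by rewrite ltn_neqAle ij' ij.
  have di : at_dist i (g i) by apply: gd; lia.
  exact/negbTE/(at_dist_far di (gd j jm) ij2).
apply: npath; exists (fun i : 'I_l => g i); split.
  move=> i j /= gij; apply: val_inj; apply: (at_dist_inj (gd i (im i))).
  by rewrite gij; apply: gd (im j).
move=> i j; rewrite /path_rel; case: (ltngtP i j) => h.
- have -> : (j.+1 == i) = false by apply/eqP; lia.
  by rewrite eg ?im // orbF.
- have -> : (i.+1 == j) = false by apply/eqP; lia.
  by rewrite e_sym eg ?im.
- by rewrite (val_inj h) e_irr; apply/esym/negbTE; rewrite negb_or !eqn_leq; lia.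
Qed.

Lemma in_ball_path_free l x : connected e -> ~ has_induced e (@path_rel l) ->
  x \in ball (l - 2).
Proof.
move=> con npath; have /connectP[p pp ->] := con v x.
have v0 : v \in ball 0 by rewrite set11.
have [m _ dm] := at_dist_exists (ball_path v0 pp).
by apply/(subsetP (ball_mono _))/at_dist_ball/dm; have := at_dist_path_free npath dm; lia.
Qed.

Lemma alpha_le_ball r s i : 0 < r -> 0 < s ->
  ~ has_induced e (@star_rel r) -> ~ has_induced e (@hair_rel s) ->
  alpha_le e (ball i) (alpha_bound r s i).
Proof.
move=> r_gt0 s_gt0 nstar nhair; elim: i => [|i IH] I IB sI /=.
  by apply: leq_trans (subset_leq_card IB) _; rewrite cards1.
rewrite -(cardsID (ball i) I); apply: leq_add.
  by apply: IH; [apply: subsetIr | apply: stableS sI; apply: subsetIl].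
apply: (alpha_le_dominated e_sym e_irr r_gt0 s_gt0 nstar nhair (Y := ball i.+1 :\: ball i) IH).
- by rewrite disjoints_subset setCD subsetUr.
- move=> y; rewrite in_setD => /andP[yn yB]; have [z dz ezy] := ball_pred yB yn.
  by exists z => //; apply: at_dist_ball.
- exact: setSD.
- by apply: stableS sI; apply: subsetDl.
Qed.

Lemma geodesic_set l x : connected e -> ~ has_induced e (@path_rel l) ->
  exists P : {set T},
    [/\ x \in P, v \in P, #|P| <= l & {in P, forall y, connect (adj_in e P) y v}].
Proof.
move=> con npath; have [m _ dm] := at_dist_exists (in_ball_path_free x con npath).
have ml := at_dist_path_free npath dm.
have [g [gm gd ge]] := geodesic dm.
have g0 : g 0 = v by have := at_dist_ball (gd 0 isT); rewrite inE => /eqP.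
pose P := [set g (val i) | i : 'I_m.+1].
have gP i : i <= m -> g i \in P by move=> im; apply/imsetP; exists (Ordinal (im : i < m.+1)).
exists P; split; first by rewrite -gm gP.
- by rewrite -g0 gP.
- by apply: leq_trans (leq_imset_card _ _) _; rewrite card_ord; lia.
move=> _ /imsetP[[i im] _ ->] /=; elim: i im => [|i IH] im; first by rewrite g0.
apply: connect_trans (IH (ltnW im)); apply: connect1.
have im' : i < m by rewrite -ltnS.
by rewrite /adj_in /= e_sym ge // !gP // ltnW.
Qed.

Lemma alpha_le_path_free r s l : 0 < r -> 0 < s -> connected e ->
  ~ has_induced e (@star_rel r) -> ~ has_induced e (@hair_rel s) ->
  ~ has_induced e (@path_rel l) -> alpha_le e [set: T] (alpha_bound r s (l - 2)).
Proof.
move=> r_gt0 s_gt0 con nstar nhair npath I _.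
apply: (alpha_le_ball (i := l - 2) r_gt0 s_gt0 nstar nhair).
by apply/subsetP => x _; apply: in_ball_path_free.
Qed.

End Balls.

Theorem theorem9 (r s l : nat) (hr : 3 <= r) (hs : 3 <= s) (hl : 4 < l) :
  exists C : nat,
    forall (T : finType) (e : rel T),
      symmetric e -> irreflexive e -> 3 <= #|T| -> connected e ->
      ~ has_induced e (@star_rel r) ->
      ~ has_induced e (@hair_rel s) ->
      ~ has_induced e (@path_rel l) ->
      rx3 e <= sdiam3 e + C.
Proof.
set A := alpha_bound r s (l - 2).
exists (2 ^ (3 * A * l).+1).+3 => T e e_sym e_irr T3 con nstar nhair npath.
apply: leq_trans (leq_addl _ _).
have /card_gt0P[v _] : 0 < #|T| by apply: leq_trans T3.
have r_gt0 : 0 < r by lia.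
have s_gt0 : 0 < s by lia.
have alphaT := alpha_le_path_free e_sym e_irr v r_gt0 s_gt0 con nstar nhair npath.
have [D [sD dD mD]] := dominating_stables e_sym 3.
pose X := \bigcup_(i < 3) D i.
have cX : #|X| <= 3 * A.
  by rewrite -[3]card_ord; apply: card_bigcup_le => i _; apply: alphaT.
have [K [XK cK K_conn]] := connected_hull e_sym (v := v) (X := X)
  (fun x _ => geodesic_set e_sym e_irr v x con npath).
have D_sub i : i < 3 -> D i \subset K.
  by move=> i3; apply: subset_trans XK; apply: (bigcup_sup (Ordinal i3)).
have D_dom w : w \notin K -> forall i, i < 3 -> exists2 d, d \in D i & e w d.
  by move=> wK; apply: mD => j j3; apply: contra wK; apply/subsetP/D_sub.
apply: leq_trans (rx3_le _) _.
  by apply/existsP; exists (rainbow_color K D); exact: three_rainbow_rainbow_color.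
by rewrite !ltnS leq_pexp2l // (leq_trans cK) // ltnS leq_mul2r cX orbT.
Qed.
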